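(* For any instance of MPMD or MBPMD, the total waiting cost incurred by Greedy Dual equals $\sum_{S\subseteq V}\mathrm{sur}(S)\,y_S(T)$, where $V$ is the set of all requests and $T$ is the time at which Greedy Dual matches the last request.
   Context: Problem (MPMD / MBPMD). Let $(\mathcal{X},\mathrm{dist})$ be a metric space. An instance consists of $2m$ requests $u_1,\dots,u_{2m}$. Each request $u$ is a triple $(\mathrm{pos}(u),\mathrm{atime}(u),\mathrm{sgn}(u))$, where $\mathrm{pos}(u)\in\mathcal{X}$ is its location and $\mathrm{atime}(u)\ge0$ is its arrival time, with arrival times nondecreasing. In MPMD, $\mathrm{sgn}(u)=0$ for all requests. In MBPMD, exactly $m$ requests have sign $+1$ and $m$ have sign $-1$. At time $\tau$, an algorithm may match two arrived, unmatched requests $u,v$ with $\mathrm{sgn}(u)=-\mathrm{sgn}(v)$, at cost $\mathrm{dist}(\mathrm{pos}(u),\mathrm{pos}(v))$ (connection cost) plus $(\tau-\mathrm{atime}(u))+(\tau-\mathrm{atime}(v))$ (waiting costs). All requests must eventually be matched. The total waiting cost of an algorithm is the sum, over all requests, of the time between the request's arrival and the moment it is matched. Notation. Edges are unordered pairs $\{u,v\}$ of distinct requests with $\mathrm{sgn}(u)=-\mathrm{sgn}(v)$. For a set $S$ of requests, $\delta(S)$ is the set of edges with exactly one endpoint in $S$. In MPMD, $\mathrm{sur}(S)=|S|\bmod 2$; in MBPMD, $\mathrm{sur}(S)=|\sum_{u\in S}\mathrm{sgn}(u)|$. For an edge $e=(u,v)$, $\mathrm{cost}(e)=\mathrm{dist}(\mathrm{pos}(u),\mathrm{pos}(v))+|\mathrm{atime}(u)-\mathrm{atime}(v)|$.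 Algorithm Greedy Dual (GD). GD maintains a dual variable $y_S\ge0$ for every set $S$ of already-arrived requests; $y_S(\tau)$ denotes its value at time $\tau$. It also maintains a partition of the arrived requests into active sets, with $\mathcal{A}(u)$ denoting the active set containing $u$. An active set is growing if it contains at least one free request, and non-growing otherwise. - When a request $u$ arrives, $\mathcal{A}(u)\leftarrow\{u\}$ becomes a new active set, and $y_S\leftarrow 0$ for every new set $S$ containing $u$. - Tight-constraint event: while there is an edge $e=(u,v)$ between arrived requests with $\mathcal{A}(u)\neq\mathcal{A}(v)$ and $\sum_{S:\,e\in\delta(S)}y_S=\mathrm{cost}(e)$, GD does the following. It merges the two sets: $S=\mathcal{A}(u)\cup\mathcal{A}(v)$ becomes active and $\mathcal{A}(w)\leftarrow S$ for all $w\in S$, while $\mathcal{A}(u)$ and $\mathcal{A}(v)$ become inactive. It marks the edge $e$. Then, while there are free $u',v'\in S$ with $\mathrm{sgn}(u')=-\mathrm{sgn}(v')$, it matches $u'$ with $v'$ at the current time. - At all other times, $y_S$ increases continuously at rate $1$ (the same rate as time) for every active growing set $S$; all other dual variables stay constant. *)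

From HB Require Import structures.
From mathcomp Require Import all_boot all_order all_algebra.
Set Implicit Arguments.
Unset Strict Implicit.
Unset Printing Implicit Defensive.
Import Order.TTheory GRing.Theory Num.Theory.
Local Open Scope ring_scope.

Definition is_metric (R : realFieldType) (X : Type) (dist : X -> X -> R) : Prop :=
  [/\ (forall x y, 0 <= dist x y),
      (forall x y, dist x y = 0 <-> x = y),
      (forall x y, dist x y = dist y x)
    & (forall x y z, dist x z <= dist x y + dist y z)].

Section GreedyDual.

Variables (R : realFieldType) (X : Type) (dist : X -> X -> R).
(* bip = false : MPMD ;  bip = true : MBPMD *)
Variable bip : bool.
(* 2m requests u_1..u_{2m}, represented by 'I_(2*m) in arrival order *)
Variable m : nat.
Local Notation req := 'I_(2 * m).
Variables (pos : req -> X) (atime : req -> R) (sgn : req -> int).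

Definition valid_instance : Prop :=
  [/\ (forall u, 0 <= atime u),
      (forall u v : req, (val u <= val v)%N -> atime u <= atime v)
    & (if bip then
         [/\ (forall u, sgn u = 1 \/ sgn u = -1),
             #|[set u | sgn u == 1]| = m
           & #|[set u | sgn u == -1]| = m]
       else forall u, sgn u = 0)].

Definition sur (S : {set req}) : nat :=
  if bip then absz (\sum_(u in S) sgn u) else (#|S| %% 2)%N.

Definition edge (u v : req) : bool := (u != v) && (sgn u == - sgn v).

Definition cost (u v : req) : R := dist (pos u) (pos v) + `|atime u - atime v|.

(* sum of y_S over the sets S with e = {u,v} in delta(S) *)
Definition load (y : {set req} -> R) (u v : req) : R :=
  \sum_(S : {set req} | (u \in S) != (v \in S)) y S.

Record state := mkState {
  now : R;
  narr : nat;                  (* the first narr requests have arrived *)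
  act : req -> {set req};      (* A(u), for arrived u *)
  yv : {set req} -> R;
  freereq : {set req};
  mtime : req -> R             (* time at which a matched request was matched *)
}.

Definition arrived (s : state) : {set req} := [set u : req | (val u < narr s)%N].

Definition init_state : state :=
  mkState 0 0 (fun _ => set0) (fun _ => 0) set0 (fun _ => 0).

Definition can_match (s : state) (u v : req) : Prop :=
  [/\ u \in freereq s, v \in freereq s, u != v, sgn u = - sgn v & act s u = act s v].

Definition matchable (s : state) : Prop := exists u v, can_match s u v.

Definition cross_edge (s : state) (u v : req) : Prop :=
  [/\ u \in arrived s, v \in arrived s, edge u v & act s u != act s v].

Definition tight (s : state) (u v : req) : Prop :=
  cross_edge s u v /\ load (yv s) u v = cost u v.

Definition growing (s : state) (S : {set req}) : bool :=
  [exists u in arrived s, act s u == S] && [exists w in freereq s, w \in S].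

Definition arrive_result (s : state) (k : req) : state :=
  mkState (now s) (narr s).+1
    (fun w => if w == k then [set k] else act s w) (yv s) (k |: freereq s) (mtime s).

Definition merge_result (s : state) (u v : req) : state :=
  let S := act s u :|: act s v in
  mkState (now s) (narr s) (fun w => if w \in S then S else act s w)
    (yv s) (freereq s) (mtime s).

Definition match_result (s : state) (u v : req) : state :=
  mkState (now s) (narr s) (act s) (yv s) (freereq s :\ u :\ v)
    (fun w => if (w == u) || (w == v) then now s else mtime s w).

Definition grow_y (s : state) (d : R) : {set req} -> R :=
  fun S => if growing s S then yv s S + d else yv s S.

Definition grow_result (s : state) (d : R) : state :=
  mkState (now s + d) (narr s) (act s) (grow_y s d) (freereq s) (mtime s).

Inductive step : state -> state -> Prop :=
| StepArrive s k :
    ~ matchable s -> val k = narr s -> atime k = now s ->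
    step s (arrive_result s k)
| StepTight s u v :
    ~ matchable s -> tight s u v ->
    step s (merge_result s u v)
| StepMatch s u v :
    can_match s u v ->
    step s (match_result s u v)
| StepGrow s d :
    0 < d -> ~ matchable s ->
    (forall u v, cross_edge s u v -> load (yv s) u v < cost u v) ->
    (forall k : req, (narr s <= val k)%N -> now s + d <= atime k) ->
    (forall u v, cross_edge s u v -> load (grow_y s d) u v <= cost u v) ->
    step s (grow_result s d).

Inductive reachable : state -> Prop :=
| reach_init : reachable init_state
| reach_step s s' : reachable s -> step s s' -> reachable s'.

Definition waiting_cost (s : state) : R := \sum_(u : req) (mtime s u - atime u).

Definition sur_dual (s : state) : R := \sum_(S : {set req}) (sur S)%:R * yv s S.

End GreedyDual.

From HB Require Import structures.
From mathcomp Require Import all_boot all_order all_algebra.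
From mathcomp Require Import zify.
Set Implicit Arguments.
Unset Strict Implicit.
Unset Printing Implicit Defensive.
Import Order.TTheory GRing.Theory Num.Theory.
Local Open Scope ring_scope.

(* Invariant: the matched requests of every active set are balanced (sign sum
   0, resp. even count), so as long as nothing can be matched, a growing active
   set S contains exactly sur(S) free requests.  Hence, while the duals grow by
   d, the dual objective grows by d * #free, exactly as the accrued waiting
   cost does; arrivals, merges and matches change neither quantity. *)

Section GreedyDualWaitingCost.

Variables (R : realFieldType) (X : Type) (dist : X -> X -> R) (bip : bool).
Variables (m : nat) (pos : 'I_(2 * m) -> X) (atime : 'I_(2 * m) -> R).
Variable sgn : 'I_(2 * m) -> int.
Local Notation req := 'I_(2 * m).
Local Notation state := (state R m).

Definition sign_pattern : Prop :=
  if bip then forall u, sgn u = 1 \/ sgn u = -1 else forall u, sgn u = 0.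

Lemma valid_sign_pattern : valid_instance bip atime sgn -> sign_pattern.
Proof. by rewrite /sign_pattern; case=> _ _; case: bip => // -[]. Qed.

Definition balanced (M : {set req}) : bool :=
  if bip then \sum_(x in M) sgn x == 0 else ~~ odd #|M|.

Lemma balanced0 : balanced set0.
Proof. by rewrite /balanced big_set0 cards0; case: bip. Qed.

Lemma balancedU (A B : {set req}) :
  [disjoint A & B] -> balanced A -> balanced B -> balanced (A :|: B).
Proof.
move=> dAB; rewrite /balanced; case: bip.
  move=> /eqP sA /eqP sB.
  rewrite (eq_bigl [predU A & B]) => [|x]; last by rewrite !inE.
  by rewrite bigU //= sA sB addr0.
by rewrite cardsU (disjoint_setI0 dAB) cards0 subn0 oddD => /negbTE -> /negbTE ->.
Qed.

Lemma balanced_pair u v : u != v -> sgn u = - sgn v -> balanced [set u; v].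
Proof.
move=> nuv suv; rewrite /balanced cards2 nuv big_setU1 ?big_set1 ?inE //=.
by case: bip => //; rewrite suv addNr.
Qed.

(* The waiting cost accrued so far: free requests have waited until now. *)
Definition accrued_wait (s : state) : R :=
  \sum_(u in arrived s) ((if u \in freereq s then now s else mtime s u) - atime u).

Record gd_invariant (s : state) : Prop := GdInvariant {
  free_arrived : freereq s \subset arrived s;
  mem_act : forall u, u \in arrived s -> u \in act s u;
  act_arrived : forall u, u \in arrived s -> act s u \subset arrived s;
  act_class : forall u w, u \in arrived s -> w \in act s u -> act s w = act s u;
  matched_balanced : forall u, u \in arrived s -> balanced (act s u :\: freereq s);
  accrued_wait_dual : accrued_wait s = sur_dual bip sgn s
}.

Lemma act_disjoint s u v : gd_invariant s -> u \in arrived s -> v \in arrived s ->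
  act s u != act s v -> [disjoint act s u & act s v].
Proof.
move=> I ua va; apply: contraNT; rewrite -setI_eq0 => /set0Pn [x].
by rewrite inE => /andP [xu xv]; rewrite -(act_class I ua xu) (act_class I va xv).
Qed.

Lemma gd_invariant_init : gd_invariant (init_state R m).
Proof.
have A0 : arrived (init_state R m) = set0 by apply/setP => x; rewrite !inE.
split => [|u|u|u w|u|]; rewrite ?A0 ?inE ?sub0set //.
by rewrite /accrued_wait A0 big_set0 /sur_dual big1 // => S _; rewrite mulr0.
Qed.

Lemma gd_invariant_arrive s k : gd_invariant s -> val k = narr s -> atime k = now s ->
  gd_invariant (arrive_result s k).
Proof.
move=> I kn kt; set s' := arrive_result s k.
have A' : arrived s' = k |: arrived s.
  by apply/setP => x; rewrite !inE /= ltnS leq_eqVlt -kn val_eqE.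
have kA : k \notin arrived s by rewrite inE kn ltnn.
have neq_k x : x \in arrived s -> (x == k) = false.
  by move=> xa; apply/eqP => xk; rewrite -xk xa in kA.
have act_old u : u \in arrived s -> act s' u = act s u by move=> ua; rewrite /= neq_k.
split; rewrite ?A'.
- exact/setUS/free_arrived.
- by move=> u /setU1P [->|ua]; rewrite /= ?eqxx ?set11 // neq_k // mem_act.
- move=> u /setU1P [->|ua]; first by rewrite /= eqxx sub1set setU11.
  by rewrite act_old //; apply: subset_trans (act_arrived I ua) (subsetU1 _ _).
- move=> u w /setU1P [->|ua]; first by rewrite /= eqxx inE => /eqP ->; rewrite eqxx.
  rewrite act_old // => wu.
  by rewrite act_old ?(act_class I ua) // (subsetP (act_arrived I ua)).
- move=> u /setU1P [->|ua].
    by rewrite /= eqxx setDE setCU setIA setICr set0I balanced0.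
  have kS : [disjoint act s u & [set k]].
    by rewrite disjoint_sym disjoints1 (contra (subsetP (act_arrived I ua) k)).
  by rewrite act_old // /= -setDDl (setDidPl kS) matched_balanced.
- rewrite [RHS](_ : _ = sur_dual bip sgn s) // -(accrued_wait_dual I).
  rewrite /accrued_wait A' big_setU1 //= setU11 kt subrr add0r.
  by apply: eq_bigr => x xa; rewrite in_setU1 neq_k.
Qed.

Lemma gd_invariant_merge s u v : gd_invariant s -> tight dist pos atime sgn s u v ->
  gd_invariant (merge_result s u v).
Proof.
move=> I [[ua va _ nuv] _]; set S := act s u :|: act s v.
have disj_uv := act_disjoint I ua va nuv.
have class_out w x : w \in arrived s -> w \notin S -> x \in act s w -> x \notin S.
  move=> wa wS xw; apply: contra wS => /setUP [xu|xv]; rewrite inE.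
    by rewrite -(act_class I ua xu) (act_class I wa xw) mem_act.
  by rewrite -(act_class I va xv) (act_class I wa xw) mem_act ?orbT.
split => /=.
- exact: free_arrived I.
- by move=> w wa; case: ifP => wS //; apply: mem_act.
- move=> w wa; case: ifP => _; last exact: act_arrived.
  by rewrite subUset !act_arrived.
- move=> w x wa; case: ifP => wS; first by move=> ->.
  by move=> xw; rewrite (negbTE (class_out w x wa (negbT wS) xw)) (act_class I wa).
- move=> w wa; case: ifP => _; last exact: matched_balanced.
  rewrite setDUl; apply: balancedU; rewrite ?matched_balanced //.
  by apply: disjointW disj_uv; apply: subsetDl.
- exact: accrued_wait_dual I.
Qed.

Lemma gd_invariant_match s u v : gd_invariant s -> can_match sgn s u v ->
  gd_invariant (match_result s u v).
Proof.
move=> I [uF vF nuv suv auv].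
have [ua va] : u \in arrived s /\ v \in arrived s.
  by rewrite !(subsetP (free_arrived I)).
split => //=.
- by apply/subsetP => x /setD1P [_ /setD1P [_ /(subsetP (free_arrived I))]].
- exact: mem_act I.
- exact: act_arrived I.
- exact: act_class I.
- move=> w wa; rewrite setDDl setDDr.
  have [uw|uw] := boolP (u \in act s w).
    have vw : v \in act s w by rewrite -(act_class I wa uw) auv mem_act.
    rewrite (setIidPr _) ?subUset ?sub1set ?uw ?vw //.
    apply: balancedU; rewrite ?matched_balanced ?balanced_pair //.
    rewrite disjoints_subset setDE subIset //; apply/orP; right.
    by rewrite setCS subUset !sub1set uF vF.
  have vw : v \notin act s w.
    by apply: contra uw => vw; rewrite -(act_class I wa vw) -auv mem_act.
  rewrite (_ : act s w :&: _ = set0) ?setU0 ?matched_balanced //.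
  apply/setP => x; rewrite !inE.
  case: eqVneq => [->|_]; rewrite ?(negbTE uw) //=.
  by case: eqVneq => [->|_]; rewrite ?(negbTE vw) ?andbF.
- rewrite [RHS](_ : _ = sur_dual bip sgn s) // -(accrued_wait_dual I).
  apply: eq_bigr => x _ /=; rewrite !inE.
  by case: eqVneq => [->|_]; case: eqVneq => [->|_]; rewrite ?uF ?vF ?orbT.
Qed.

Hypothesis signs : sign_pattern.

Lemma free_unmatchable s w x y : gd_invariant s -> ~ matchable sgn s -> w \in arrived s ->
  x \in act s w :&: freereq s -> y \in act s w :&: freereq s -> x != y ->
  sgn x <> - sgn y.
Proof.
move=> I nM wa; rewrite !inE => /andP [xw xF] /andP [yw yF] nxy sxy.
by apply: nM; exists x, y; split; rewrite ?(act_class I wa xw) ?(act_class I wa yw).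
Qed.

Lemma sur_act_free s w : gd_invariant s -> ~ matchable sgn s -> w \in freereq s ->
  sur bip sgn (act s w) = #|act s w :&: freereq s|.
Proof.
move=> I nM wF; have wa := subsetP (free_arrived I) w wF.
have wAF : w \in act s w :&: freereq s by rewrite inE mem_act.
have := matched_balanced I wa; rewrite /balanced /sur.
move: signs; rewrite /sign_pattern; case: bip => sg.
  move=> /eqP matched0; rewrite (big_setID (freereq s)) /= matched0 addr0.
  have same x : x \in act s w :&: freereq s -> sgn x = sgn w.
    move=> xAF; have [->|nxw] := eqVneq x w => //.
    have := free_unmatchable I nM wa xAF wAF nxw.
    by case: (sg x) => ->; case: (sg w) => ->.
  rewrite (eq_bigr _ same) sumr_const -mulr_natr abszM natz.
  by case: (sg w) => ->; rewrite mul1n.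
have le1 : (#|act s w :&: freereq s| <= 1)%N.
  rewrite leqNgt; apply/card_gt1P => -[x [y [xF yF nxy]]].
  by apply: (free_unmatchable I nM wa xF yF nxy); rewrite !sg.
rewrite -(cardsID (freereq s) (act s w)) => even_matched.
have := modn2 #|act s w :\: freereq s|; rewrite (negbTE even_matched).
lia.
Qed.

Lemma growing_act s S : gd_invariant s -> growing s S ->
  exists2 w, w \in freereq s & S = act s w.
Proof.
move=> I /andP [/existsP [u /andP [ua /eqP uS]] /existsP [w /andP [wF wS]]].
by exists w => //; rewrite -uS (act_class I ua) // uS.
Qed.

Lemma sum_sur_growing s : gd_invariant s -> ~ matchable sgn s ->
  (\sum_(S | growing s S) sur bip sgn S = #|freereq s|)%N.
Proof.
move=> I nM; rewrite -sum1_card (partition_big_imset (act s)) /=.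
apply: eq_big => [S|S /(growing_act I) [w wF ->]].
  apply/idP/imsetP => [/(growing_act I)//|[w wF ->]].
  have wa := subsetP (free_arrived I) w wF.
  by apply/andP; split; apply/existsP; exists w; rewrite ?wa ?wF ?eqxx ?mem_act.
rewrite sur_act_free // -sum1_card; apply: eq_bigl => x; rewrite inE andbC.
have [xF|//] := boolP (x \in freereq s).
have [xa wa] : x \in arrived s /\ w \in arrived s.
  by rewrite !(subsetP (free_arrived I)).
by apply/idP/eqP => [/(act_class I wa)|<-]; rewrite ?mem_act.
Qed.

Lemma gd_invariant_grow s d : gd_invariant s -> ~ matchable sgn s ->
  gd_invariant (grow_result s d).
Proof.
move=> I nM; have [? ? ? ? ? _] := I; split => //.
rewrite /accrued_wait /sur_dual /=.
rewrite (eq_bigr (fun x => ((if x \in freereq s then now s else mtime s x) - atime x)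
                          + (if x \in freereq s then d else 0))); last first.
  by move=> x _; case: (x \in freereq s); rewrite ?addr0 // addrAC.
rewrite [RHS](eq_bigr (fun S => (sur bip sgn S)%:R * yv s S
                     + (if growing s S then (sur bip sgn S)%:R * d else 0))); last first.
  by move=> S _; rewrite /grow_y; case: (growing s S); rewrite ?addr0 // mulrDr.
rewrite big_split [RHS]big_split /=; congr (_ + _); first exact: accrued_wait_dual I.
rewrite -big_mkcond -mulr_suml -natr_sum sum_sur_growing //.
rewrite -big_mkcondr (eq_bigl (mem (freereq s))) ?sumr_const ?mulr_natl // => x.
by rewrite andb_idl // => /(subsetP (free_arrived I)).
Qed.

Lemma reachable_gd_invariant s : reachable dist pos atime sgn s -> gd_invariant s.
Proof.
elim=> [|s0 s1 _ I0 step01]; first exact: gd_invariant_init.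
case: step01 I0.
- by move=> {}s0 k _ kn kt I0; apply: gd_invariant_arrive.
- by move=> {}s0 u v _ tuv I0; apply: gd_invariant_merge.
- by move=> {}s0 u v uv I0; apply: gd_invariant_match.
- by move=> {}s0 d _ nM _ _ _ I0; apply: gd_invariant_grow.
Qed.

End GreedyDualWaitingCost.

Theorem lemma5 (R : realFieldType) (X : Type) (dist : X -> X -> R) (bip : bool)
    (m : nat) (pos : 'I_(2 * m) -> X) (atime : 'I_(2 * m) -> R)
    (sgn : 'I_(2 * m) -> int) :
  is_metric dist ->
  valid_instance bip atime sgn ->
  forall (s : state R m) (u v : 'I_(2 * m)),
    reachable dist pos atime sgn s ->
    can_match sgn s u v ->
    let s' := match_result s u v in
    arrived s' = [set: 'I_(2 * m)] ->
    freereq s' = set0 ->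
    waiting_cost atime s' = sur_dual bip sgn s'.
Proof.
move=> _ valid s u v reach uv s' all_arrived none_free.
have I := reachable_gd_invariant (valid_sign_pattern valid) reach.
rewrite -(accrued_wait_dual (gd_invariant_match I uv)) /accrued_wait.
rewrite -/s' all_arrived none_free /waiting_cost.
by apply: eq_big => [x|x _]; rewrite !inE.
Qed.
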